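(* Let $G=A\oplus D$ be an abelian group with $A$ reduced and $D$ divisible. Then $G$ is uniformly strongly co-Hopfian if and only if both $A$ and $D$ are uniformly strongly co-Hopfian.
   Context: All groups are abelian. A group $G$ is uniformly strongly co-Hopfian if there is a fixed $m\in\mathbb N$ such that $\phi^m(G)=\phi^{m+1}(G)$ for every endomorphism $\phi$ of $G$. *)

From HB Require Import structures.
From mathcomp Require Import all_boot all_order all_algebra.
Set Implicit Arguments. Unset Strict Implicit. Unset Printing Implicit Defensive.
Import GRing.Theory.
Local Open Scope ring_scope.

Definition im_of (G : zmodType) (f : G -> G) (x : G) : Prop := exists y, f y = x.

Definition unif_strongly_coHopfian (G : zmodType) : Prop :=
  exists m : nat, forall phi : {additive G -> G},
    forall x : G, im_of (iter m phi) x <-> im_of (iter m.+1 phi) x.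

Definition is_subgroup (G : zmodType) (S : G -> Prop) : Prop :=
  S 0 /\ (forall x y, S x -> S y -> S (x - y)).

Definition divisible_subgroup (G : zmodType) (S : G -> Prop) : Prop :=
  forall x n, S x -> (0 < n)%N -> exists2 y, S y & y *+ n = x.

Definition divisible (G : zmodType) : Prop :=
  forall (x : G) (n : nat), (0 < n)%N -> exists y : G, y *+ n = x.

Definition reduced (G : zmodType) : Prop :=
  forall S : G -> Prop, is_subgroup S -> divisible_subgroup S ->
    forall x, S x -> x = 0.

From mathcomp Require Import all_boot all_order all_algebra.
From HB Require Import structures.
Set Implicit Arguments. Unset Strict Implicit. Unset Printing Implicit Defensive.
Import GRing.Theory.
Local Open Scope ring_scope.

(* A direct summand of a uniformly strongly co-Hopfian group inherits the
   property: an endomorphism phi of A extends by zero to A (+) D, and its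
   iterates are recovered by projecting.  Conversely, every homomorphism from
   the divisible group D to the reduced group A vanishes, so an endomorphism
   of A (+) D is lower triangular, with diagonal blocks alpha on A and delta
   on D.  If the images of alpha^n stabilise from p on and those of delta^n
   from q on, the images of phi^n stabilise from q + p on: modulo
   phi^(p+1)-images, phi^p g can be pushed into D, where delta takes over. *)

Definition im_iter_stable (G : zmodType) (f : G -> G) (m : nat) : Prop :=
  forall x, im_of (iter m f) x -> im_of (iter m.+1 f) x.

Lemma unif_strongly_coHopfianP (G : zmodType) :
  unif_strongly_coHopfian G <->
  exists m, forall phi : {additive G -> G}, im_iter_stable phi m.
Proof.
split=> [[m Hm] | [m Hm]]; exists m => phi x; first exact: (Hm phi x).1.
split; first exact: Hm.
by move=> [y <-]; exists (phi y); rewrite iterSr.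
Qed.

Lemma im_iter_stable_sub (G : zmodType) (f : G -> G) m :
  im_iter_stable f m ->
  forall k x, im_of (iter m f) x -> im_of (iter (k + m) f) x.
Proof.
move=> fm; elim=> [|k IHk] x // /IHk [y <-]; rewrite iterD.
have [z fz] := fm _ (ex_intro _ y erefl).
by exists z; rewrite -fz -iterD addSnnS.
Qed.

Lemma iter_morph (T U : Type) (h : T -> U) (f : T -> T) (g : U -> U) :
  {morph h : x / f x >-> g x} ->
  forall n, {morph h : x / iter n f x >-> iter n g x}.
Proof. by move=> hfg; elim=> [|n IHn] x //=; rewrite hfg IHn. Qed.

Section IterAdditive.
Variables (G : zmodType) (f : {additive G -> G}) (n : nat).

Lemma iter_raddfD : {morph iter n f : x y / x + y}.
Proof. by elim: n => [|k IHk] x y //=; rewrite IHk raddfD. Qed.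

Lemma iter_raddfB : {morph iter n f : x y / x - y}.
Proof. by elim: n => [|k IHk] x y //=; rewrite IHk raddfB. Qed.

End IterAdditive.

Section Injections.
Variables (A D : zmodType).

Definition inj_fst (a : A) : A * D := (a, 0).
Definition inj_snd (d : D) : A * D := (0, d).

Lemma inj_fst_is_zmod_morphism : zmod_morphism inj_fst.
Proof. by move=> a b; rewrite /inj_fst; congr pair; rewrite subrr. Qed.

Lemma inj_snd_is_zmod_morphism : zmod_morphism inj_snd.
Proof. by move=> a b; rewrite /inj_snd; congr pair; rewrite subrr. Qed.

HB.instance Definition _ :=
  GRing.isZmodMorphism.Build A (A * D)%type inj_fst inj_fst_is_zmod_morphism.
HB.instance Definition _ :=
  GRing.isZmodMorphism.Build D (A * D)%type inj_snd inj_snd_is_zmod_morphism.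

Lemma pair_inj_split (g : A * D) : g = inj_fst g.1 + inj_snd g.2.
Proof.
by case: g => a d; rewrite /inj_fst /inj_snd; congr pair; rewrite ?addr0 ?add0r.
Qed.

End Injections.

Arguments inj_fst {A} D.
Arguments inj_snd A {D}.

Lemma unif_strongly_coHopfian_retract (H G : zmodType)
    (i : {additive H -> G}) (r : {additive G -> H}) :
  cancel i r -> unif_strongly_coHopfian G -> unif_strongly_coHopfian H.
Proof.
move=> iK /unif_strongly_coHopfianP[m Hm]; apply/unif_strongly_coHopfianP.
exists m => phi _ [y <-].
pose psi : {additive G -> G} := i \o phi \o r.
have i_psi : {morph i : x / phi x >-> psi x} by move=> x /=; rewrite iK.
have r_psi : {morph r : g / psi g >-> phi g} by move=> g /=; rewrite iK.
have [z psiz] : im_of (iter m.+1 psi) (i (iter m phi y)).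
  by apply: Hm; exists (i y); rewrite (iter_morph i_psi).
by exists (r z); rewrite -(iter_morph r_psi) psiz iK.
Qed.

Lemma hom_divisible_reduced_eq0 (D A : zmodType) (f : {additive D -> A}) :
  divisible D -> reduced A -> forall d, f d = 0.
Proof.
move=> divD redA d; apply: (redA (fun a => exists d, f d = a)); last by exists d.
- split=> [|_ _ [d1 <-] [d2 <-]]; first by exists 0; rewrite raddf0.
  by exists (d1 - d2); rewrite raddfB.
- move=> _ n [d1 <-] n_gt0; have [y <-] := divD d1 n n_gt0.
  by exists (f y); [exists y | rewrite raddfMn].
Qed.

Section Triangular.
Variables (A D : zmodType) (phi : {additive A * D -> A * D}).
Hypothesis phi_snd_fst : forall d, (phi (inj_snd A d)).1 = 0.

Let alpha : {additive A -> A} := fst \o phi \o inj_fst D.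
Let delta : {additive D -> D} := snd \o phi \o inj_snd A.

Lemma fst_iter_triangular n g : (iter n phi g).1 = iter n alpha g.1.
Proof.
apply: (iter_morph (h := fst)) => {}g.
by rewrite [in LHS](pair_inj_split g) raddfD /= phi_snd_fst addr0.
Qed.

Lemma iter_inj_snd_triangular n d :
  iter n phi (inj_snd A d) = inj_snd A (iter n delta d).
Proof.
apply/esym/(iter_morph (h := inj_snd A)) => {}d.
by rewrite [RHS]surjective_pairing phi_snd_fst.
Qed.

Lemma im_iter_stable_triangular p q :
  im_iter_stable alpha p -> im_iter_stable delta q ->
  im_iter_stable phi (q + p).
Proof.
move=> alpha_p delta_q _ [g <-].
have [a alpha_a] := alpha_p _ (ex_intro _ g.1 erefl).
set u := iter p phi g - iter p.+1 phi (inj_fst D a).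
have u_snd : u = inj_snd A u.2.
  rewrite [LHS]surjective_pairing; congr pair.
  have -> : u.1 = (iter p phi g).1 - (iter p.+1 phi (inj_fst D a)).1 by [].
  by rewrite !fst_iter_triangular -alpha_a subrr.
have [v delta_v] := im_iter_stable_sub delta_q p.+1 (ex_intro _ u.2 erefl).
exists (inj_snd A v + inj_fst D a).
rewrite iter_raddfD -addnS addnC iter_inj_snd_triangular delta_v.
rewrite -iter_inj_snd_triangular -u_snd addnC iterD -iter_raddfD subrK.
by rewrite -iterD.
Qed.

End Triangular.

Theorem mainTheorem10 (A D : zmodType) :
  reduced A -> divisible D ->
  (unif_strongly_coHopfian (A * D)%type <->
   unif_strongly_coHopfian A /\ unif_strongly_coHopfian D).
Proof.
move=> redA divD; split.
  move=> uscAD; split.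
    exact: (@unif_strongly_coHopfian_retract _ _ (inj_fst D) fst _ uscAD).
  exact: (@unif_strongly_coHopfian_retract _ _ (inj_snd A) snd _ uscAD).
move=> [/unif_strongly_coHopfianP[p uscA] /unif_strongly_coHopfianP[q uscD]].
apply/unif_strongly_coHopfianP; exists (q + p)%N => phi.
apply: im_iter_stable_triangular (uscA _) (uscD _).
exact: (hom_divisible_reduced_eq0 (fst \o phi \o inj_snd A)).
Qed.
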